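(* For $c\in\mathbb{R}$ and $c_1\in\mathbb{R}\setminus\{0,-1\}$ consider the Type $\mathcal{A}$ models $\mathcal{M}_1^1=\mathcal{M}(-1,0,1,0,0,2)$, $\mathcal{M}_2^1(c_1)=\mathcal{M}(-1,0,c_1,0,0,1+2c_1)$, $\mathcal{M}_3^1(c_1)=\mathcal{M}(0,0,c_1,0,0,1+2c_1)$, $\mathcal{M}_4^1(c)=\mathcal{M}(0,0,1,0,c,2)$, $\mathcal{M}_5^1(c)=\mathcal{M}(1,0,0,0,1+c^2,2c)$. Their isotropy groups are: (1) $\mathcal{I}(\mathcal{M}_1^1)=\{\mathrm{id}\}$. (2) $\mathcal{I}(\mathcal{M}_2^1(c_1))=\{\mathrm{id}\}$ if $c_1\neq-\frac12$. (3) $\mathcal{I}(\mathcal{M}_2^1(-\frac12))=\{\mathrm{id},T\}$ where $T(x^1,x^2)=(x^1+x^2,-x^2)$. (4) $\mathcal{I}(\mathcal{M}_3^1(c_1))=\{T: T(x^1,x^2)=(v^{-1}x^1,x^2),\ v\in\mathbb{R}\setminus\{0\}\}$. (5) $\mathcal{I}(\mathcal{M}_4^1(c))=\{T:T(x^1,x^2)=(x^1-wx^2,x^2),\ w\in\mathbb{R}\}$ if $c\neq0$. (6) $\mathcal{I}(\mathcal{M}_4^1(0))=\{T:T(x^1,x^2)=(v^{-1}(x^1-wx^2),x^2),\ w\in\mathbb{R},\ v\in\mathbb{R}\setminus\{0\}\}$. (7) $\mathcal{I}(\mathcal{M}_5^1(c))=\{\mathrm{id}\}$ if $c\neq0$.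 (8) $\mathcal{I}(\mathcal{M}_5^1(0))=\{\mathrm{id},T\}$ where $T(x^1,x^2)=(x^1,-x^2)$.
   Context: For $(a,b,c,d,e,f)\in\mathbb{R}^6$, the Type $\mathcal{A}$ model $\mathcal{M}(a,b,c,d,e,f)$ is $(\mathbb{R}^2,\nabla)$ with torsion free connection with constant Christoffel symbols ($\nabla_{\partial_{x^i}}\partial_{x^j}=\Gamma_{ij}{}^k\partial_{x^k}$) $\Gamma_{11}{}^1=a$, $\Gamma_{11}{}^2=b$, $\Gamma_{12}{}^1=\Gamma_{21}{}^1=c$, $\Gamma_{12}{}^2=\Gamma_{21}{}^2=d$, $\Gamma_{22}{}^1=e$, $\Gamma_{22}{}^2=f$. The group $\operatorname{GL}(2,\mathbb{R})$ acts on Type $\mathcal{A}$ models by linear changes of coordinates $T$ (pulling back the connection, which again has constant Christoffel symbols). The isotropy group of a model $\mathcal{M}$ is $\mathcal{I}(\mathcal{M})=\{T\in\operatorname{GL}(2,\mathbb{R}): T^*\mathcal{M}=\mathcal{M}\}$. *)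

From HB Require Import structures.
From mathcomp Require Import all_boot all_order all_algebra.
From mathcomp Require Import reals.
Set Implicit Arguments. Unset Strict Implicit. Unset Printing Implicit Defensive.
Import Order.TTheory GRing.Theory Num.Theory.
Local Open Scope ring_scope.

(* Christoffel symbols Gamma i j k = Γ_{ij}^k, indices in 'I_2 (0 <-> x^1, 1 <-> x^2). *)
Definition christoffel (R : realType) := 'I_2 -> 'I_2 -> 'I_2 -> R.

(* The Type A model M(a,b,c,d,e,f) (torsion free: Γ_12 = Γ_21). *)
Definition typeA (R : realType) (a b c d e f : R) : christoffel R :=
  fun i j k =>
    let s := (i + j)%N in
    if s == 0%N then (if k == 0 :> nat then a else b)
    else if s == 1%N then (if k == 0 :> nat then c else d)
    else (if k == 0 :> nat then e else f).

(* The matrix of the linear map T(x^1,x^2) = (p x^1 + q x^2, r x^1 + s x^2). *)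
Definition mx2 (R : realType) (p q r s : R) : 'M[R]_2 :=
  \matrix_(i < 2, j < 2)
    if i == 0 :> nat then (if j == 0 :> nat then p else q)
    else (if j == 0 :> nat then r else s).

Definition pullback (R : realType) (A : 'M[R]_2) (G : christoffel R) : christoffel R :=
  fun a b c => \sum_(i < 2) \sum_(j < 2) \sum_(k < 2)
                 invmx A c k * A i a * A j b * G i j k.

Definition isotropy (R : realType) (G : christoffel R) (A : 'M[R]_2) : Prop :=
  A \in unitmx /\ pullback A G = G.

(* Multiplying by the matrix A of T to clear invmx, the
   condition T^*Γ = Γ becomes A^i_a A^j_b Γ_ij^k = A^k_c Γ_ab^c, which for a
   Type A model is a system of six quadratic equations in p, q, r, s.  In each
   model one of these equations forces r = 0; then det T = p s is non-zero, so
   p and s can be cancelled from the remaining equations, which pin down T. *)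

From HB Require Import structures.
From mathcomp Require Import all_boot all_order all_algebra.
From mathcomp Require Import reals.
From mathcomp Require Import boolp ring lra.
Set Implicit Arguments. Unset Strict Implicit. Unset Printing Implicit Defensive.
Import Order.TTheory GRing.Theory Num.Theory.
Local Open Scope ring_scope.

Section TwoByTwo.
Variable R : realType.
Implicit Types p q r s : R.

Lemma mx2_ind (P : 'M[R]_2 -> Prop) :
  (forall p q r s, P (mx2 p q r s)) -> forall A, P A.
Proof.
move=> Pmx2 A; suff -> : A = mx2 (A 0 0) (A 0 1) (A 1 0) (A 1 1) by [].
apply/matrixP => i j; rewrite !mxE.
by case: i => [[|[]]] // ?; case: j => [[|[]]] // ?; congr (A _ _); apply: val_inj.
Qed.

Lemma mx2_inj p q r s p' q' r' s' :
  mx2 p q r s = mx2 p' q' r' s' <-> [/\ p = p', q = q', r = r' & s = s'].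
Proof.
split=> [E | [-> -> -> ->]] //.
by split; [move/matrixP/(_ 0 0): E | move/matrixP/(_ 0 1): E
         | move/matrixP/(_ 1 0): E | move/matrixP/(_ 1 1): E]; rewrite !mxE.
Qed.

Lemma mx2_1 : 1%:M = mx2 1 0 0 1 :> 'M[R]_2.
Proof.
apply/matrixP => i j; rewrite !mxE.
by case: i => [[|[]]] // ?; case: j => [[|[]]].
Qed.

Lemma det_mx2 p q r s : \det (mx2 p q r s) = p * s - q * r.
Proof.
rewrite (expand_det_row _ 0) !big_ord_recl big_ord0 /cofactor !det_mx11 !mxE /=.
by rewrite /bump /=; ring.
Qed.

Lemma unitmx_mx2 p q r s : (mx2 p q r s \in unitmx) = (p * s - q * r != 0).
Proof. by rewrite unitmxE det_mx2 unitfE. Qed.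

End TwoByTwo.

Section Pullback.
Variable R : realType.
Implicit Types (A : 'M[R]_2) (G : christoffel R).

Definition pullback_lower A G : christoffel R :=
  fun a b k => \sum_(i < 2) \sum_(j < 2) A i a * A j b * G i j k.

Lemma pullback_col A G a b :
  \col_c pullback A G a b c = invmx A *m \col_k pullback_lower A G a b k.
Proof.
apply/matrixP => c j; rewrite !mxE /pullback.
under eq_bigr => i _ do rewrite exchange_big /=.
rewrite exchange_big /=; apply: eq_bigr => k _; rewrite mxE mulr_sumr.
apply: eq_bigr => i _; rewrite mulr_sumr.
by apply: eq_bigr => j' _; rewrite !mulrA.
Qed.

Lemma pullback_fixedP A G : A \in unitmx ->
  pullback A G = G <->
  forall a b k, pullback_lower A G a b k = \sum_(c < 2) A k c * G a b c.
Proof.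
move=> uA; split=> [fixed a b k | lowerE].
- have /matrixP/(_ k 0) := congr1 (mulmx A) (pullback_col A G a b).
  rewrite mulKVmx // fixed !mxE => <-.
  by apply: eq_bigr => c _; rewrite mxE.
- apply: funext => a; apply: funext => b; apply: funext => c.
  have /matrixP/(_ c 0) := pullback_col A G a b; rewrite mxE => ->.
  have -> : \col_k pullback_lower A G a b k = A *m \col_c G a b c.
    by apply/matrixP => k j; rewrite !mxE lowerE; apply: eq_bigr => c' _; rewrite mxE.
  by rewrite mulKmx // mxE.
Qed.

End Pullback.

Section TypeA.
Variable R : realType.
Implicit Types a b c d e f p q r s : R.

(* The components (11,1), (11,2), (12,1), (12,2), (22,1), (22,2) of the
   equation of [pullback_fixedP]. *)
Definition isotropy_eqs a b c d e f p q r s : Prop :=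
  [/\ a * p ^+ 2 + 2 * c * p * r + e * r ^+ 2 = p * a + q * b,
      b * p ^+ 2 + 2 * d * p * r + f * r ^+ 2 = r * a + s * b,
      a * p * q + c * (p * s + r * q) + e * r * s = p * c + q * d,
      b * p * q + d * (p * s + r * q) + f * r * s = r * c + s * d &
      [/\ a * q ^+ 2 + 2 * c * q * s + e * s ^+ 2 = p * e + q * f &
          b * q ^+ 2 + 2 * d * q * s + f * s ^+ 2 = r * e + s * f]].

Lemma pullback_fixed_typeA_mx2 a b c d e f p q r s :
  (forall i j k, pullback_lower (mx2 p q r s) (typeA a b c d e f) i j k =
                 \sum_(l < 2) mx2 p q r s k l * typeA a b c d e f i j l) <->
  isotropy_eqs a b c d e f p q r s.
Proof.
rewrite /pullback_lower; split=> [E | [E1 E2 E3 E4 [E5 E6]] i j k].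
- have := E 0 0 0; have := E 0 0 1; have := E 0 1 0; have := E 0 1 1;
    have := E 1 1 0; have := E 1 1 1.
  rewrite !big_ord_recl !big_ord0 /typeA !mxE /= => ? ? ? ? ? ?.
  by split; [lra | lra | lra | lra | split; lra].
- case: i => [[|[]]] // ?; case: j => [[|[]]] // ?; case: k => [[|[]]] // ?;
    rewrite !big_ord_recl !big_ord0 /typeA !mxE /=; lra.
Qed.

Lemma isotropy_typeA_mx2 a b c d e f p q r s :
  isotropy (typeA a b c d e f) (mx2 p q r s) <->
  p * s - q * r != 0 /\ isotropy_eqs a b c d e f p q r s.
Proof.
rewrite /isotropy -unitmx_mx2 -pullback_fixed_typeA_mx2.
by split=> -[uA fixed]; split=> //; apply/pullback_fixedP.
Qed.

End TypeA.

Section Models.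
Variable R : realType.
Implicit Types (c p q r s : R) (A : 'M[R]_2).

Definition M1 : christoffel R := typeA (-1) 0 1 0 0 2.
Definition M2 (c1 : R) : christoffel R := typeA (-1) 0 c1 0 0 (1 + 2 * c1).
Definition M3 (c1 : R) : christoffel R := typeA 0 0 c1 0 0 (1 + 2 * c1).
Definition M4 c : christoffel R := typeA 0 0 1 0 c 2.
Definition M5 c : christoffel R := typeA 1 0 0 0 (1 + c ^+ 2) (2 * c).

Lemma isotropy_M1 A : isotropy M1 A <-> A = 1%:M.
Proof.
elim/mx2_ind: A => p q r s; rewrite isotropy_typeA_mx2 mx2_1 mx2_inj.
split=> [[det [E1 E2 E3 E4 [E5 E6]]] | [-> -> -> ->]]; last first.
  by split; [apply/eqP; lra | split; try split; lra].
have r0 : r = 0.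
  have [// | r0] := eqVneq r 0.
  have s_half : s = 1 / 2 by apply: (mulfI r0); lra.
  by rewrite s_half in E6; lra.
subst r; move: det; rewrite mulr0 subr0 mulf_eq0 negb_or => /andP[p0 s0].
have p1 : p = 1 by apply: (mulfI p0); lra.
have s1 : s = 1 by apply: (mulfI s0); lra.
by subst; split=> //; lra.
Qed.

Lemma isotropy_M2 (c1 : R) : c1 != 0 -> c1 != -1 -> c1 != - (1 / 2) ->
  forall A, isotropy (M2 c1) A <-> A = 1%:M.
Proof.
move=> c0 c_m1 c_half A.
have k0 : 1 + 2 * c1 != 0 by apply/eqP => ?; move/eqP: c_half; apply; lra.
elim/mx2_ind: A => p q r s; rewrite isotropy_typeA_mx2 mx2_1 mx2_inj.
split=> [[det [E1 E2 E3 E4 [E5 E6]]] | [-> -> -> ->]]; last first.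
  by split; [apply/eqP; lra | split; try split; lra].
have r0 : r = 0.
  have [// | r0] := eqVneq r 0.
  have ks : (1 + 2 * c1) * s = c1 by apply: (mulfI r0); lra.
  (* E6 minus s times ks gives c1 * s = c1. *)
  have s1 : s = 1 by apply: (mulfI c0); nra.
  by move/eqP: c_m1; rewrite s1 in ks; lra.
subst r; move: det; rewrite mulr0 subr0 mulf_eq0 negb_or => /andP[p0 s0].
have p1 : p = 1 by apply: (mulfI p0); lra.
have s1 : s = 1 by apply: (mulfI s0); apply: (mulfI k0); lra.
by subst; split=> //; lra.
Qed.

Lemma isotropy_M2_Nhalf A :
  isotropy (M2 (- (1 / 2))) A <-> A = 1%:M \/ A = mx2 1 1 0 (-1).
Proof.
elim/mx2_ind: A => p q r s; rewrite isotropy_typeA_mx2 mx2_1 !mx2_inj.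
split=> [[det [E1 E2 E3 E4 [E5 E6]]] | [] [-> -> -> ->]]; last first.
- by split; [apply/eqP; lra | split; try split; lra].
- by split; [apply/eqP; lra | split; try split; lra].
have r0 : r = 0 by lra.
subst r; move: det; rewrite mulr0 subr0 mulf_eq0 negb_or => /andP[p0 _].
have p1 : p = 1 by apply: (mulfI p0); lra.
subst p; have s_q : s = 1 - 2 * q by lra.
subst s; have [q0 | q0] := eqVneq q 0; [left | right].
- by subst; split; lra.
- have q1 : q = 1 by apply: (mulfI q0); lra.
  by subst; split; lra.
Qed.

Lemma isotropy_M3 (c1 : R) : c1 != 0 ->
  forall A, isotropy (M3 c1) A <-> exists v, v != 0 /\ A = mx2 v^-1 0 0 1.
Proof.
move=> c0 A; elim/mx2_ind: A => p q r s; rewrite isotropy_typeA_mx2.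
split=> [[det [E1 E2 E3 E4 [E5 E6]]] | [v [v0 /mx2_inj[-> -> -> ->]]]]; last first.
  by split; [rewrite mulr1 mulr0 subr0 invr_eq0 | split; try split; lra].
have r0 : r = 0.
  have [// | r0] := eqVneq r 0.
  have c_half : c1 = - (1 / 2) by apply: (mulfI r0); apply: (mulfI r0); lra.
  by rewrite c_half in E4; lra.
subst r; move: det; rewrite mulr0 subr0 mulf_eq0 negb_or => /andP[p0 _].
have s1 : s = 1 by apply: (mulfI p0); apply: (mulfI c0); lra.
have q0 : q = 0 by subst s; lra.
by exists p^-1; subst; rewrite invr_eq0 invrK.
Qed.

Lemma isotropy_M4 c p q r s :
  isotropy (M4 c) (mx2 p q r s) <-> [/\ p != 0, r = 0, s = 1 & c * p = c].
Proof.
rewrite isotropy_typeA_mx2.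
split=> [[det [E1 E2 E3 E4 [E5 E6]]] | [p0 -> -> cp]]; last first.
  by split; [rewrite mulr1 mulr0 subr0 | split; try split; lra].
have r0 : r = 0 by apply/eqP; rewrite -sqrf_eq0; apply/eqP; lra.
subst r; move: det; rewrite mulr0 subr0 mulf_eq0 negb_or => /andP[p0 _].
have s1 : s = 1 by apply: (mulfI p0); lra.
by subst s; split=> //; lra.
Qed.

Lemma isotropy_M4_neq0 c : c != 0 ->
  forall A, isotropy (M4 c) A <-> exists w, A = mx2 1 (- w) 0 1.
Proof.
move=> c0 A; elim/mx2_ind: A => p q r s; rewrite isotropy_M4.
split=> [[p0 -> -> cp] | [w /mx2_inj[-> _ -> ->]]]; last by rewrite oner_eq0 mulr1.
have p1 : p = 1 by apply: (mulfI c0); rewrite mulr1.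
by exists (- q); rewrite opprK p1.
Qed.

Lemma isotropy_M4_0 A :
  isotropy (M4 0) A <-> exists w v, v != 0 /\ A = mx2 v^-1 (- (v^-1 * w)) 0 1.
Proof.
elim/mx2_ind: A => p q r s; rewrite isotropy_M4.
split=> [[p0 -> -> _] | [w [v [v0 /mx2_inj[-> _ -> ->]]]]]; last first.
  by rewrite invr_eq0 mul0r.
exists (- (q / p)), p^-1; split; first by rewrite invr_eq0.
by rewrite invrK mulrN opprK mulrC divfK.
Qed.

Lemma isotropy_M5 c : c != 0 ->
  forall A, isotropy (M5 c) A <-> A = 1%:M.
Proof.
move=> c0 A; elim/mx2_ind: A => p q r s; rewrite isotropy_typeA_mx2 mx2_1 mx2_inj.
split=> [[det [E1 E2 E3 E4 [E5 E6]]] | [-> -> -> ->]]; last first.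
  by split; [apply/eqP; lra | split; try split; lra].
have r0 : r = 0.
  have [// | r0] := eqVneq r 0.
  have s0 : s = 0 by apply: (mulfI r0); apply: (mulfI c0); lra.
  have : 1 + c ^+ 2 = 0 by apply: (mulfI r0); rewrite s0 in E6; lra.
  by have := sqr_ge0 c; lra.
subst r; move: det; rewrite mulr0 subr0 mulf_eq0 negb_or => /andP[p0 s0].
have p1 : p = 1 by apply: (mulfI p0); lra.
have q0 : q = 0 by apply: (mulfI p0); lra.
have s1 : s = 1 by apply: (mulfI s0); apply: (mulfI c0); lra.
by split.
Qed.

Lemma isotropy_M5_0 A :
  isotropy (M5 0) A <-> A = 1%:M \/ A = mx2 1 0 0 (-1).
Proof.
elim/mx2_ind: A => p q r s; rewrite isotropy_typeA_mx2 mx2_1 !mx2_inj.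
split=> [[det [E1 E2 E3 E4 [E5 E6]]] | [] [-> -> -> ->]]; last first.
- by split; [apply/eqP; lra | split; try split; lra].
- by split; [apply/eqP; lra | split; try split; lra].
have r0 : r = 0 by lra.
subst r; move: det; rewrite mulr0 subr0 mulf_eq0 negb_or => /andP[p0 _].
have p1 : p = 1 by apply: (mulfI p0); lra.
have q0 : q = 0 by apply: (mulfI p0); lra.
subst p q; have [-> | s1] := eqVneq s 1; [by left | right].
have s1' : s - 1 != 0 by rewrite subr_eq0.
by split=> //; apply: (mulfI s1'); lra.
Qed.

End Models.

Theorem lemma4p2 (R : realType) :
  (* (1) *)
  (forall A : 'M[R]_2,
     isotropy (typeA (-1) 0 1 0 0 2) A <-> A = 1%:M) /\
  (* (2) *)
  (forall c1 : R, c1 != 0 -> c1 != -1 -> c1 != - (1 / 2) ->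
   forall A : 'M[R]_2,
     isotropy (typeA (-1) 0 c1 0 0 (1 + 2 * c1)) A <-> A = 1%:M) /\
  (* (3) *)
  (forall A : 'M[R]_2,
     isotropy (typeA (-1) 0 (- (1 / 2)) 0 0 (1 + 2 * (- (1 / 2)))) A <->
     (A = 1%:M \/ A = mx2 1 1 0 (-1))) /\
  (* (4) *)
  (forall c1 : R, c1 != 0 -> c1 != -1 ->
   forall A : 'M[R]_2,
     isotropy (typeA 0 0 c1 0 0 (1 + 2 * c1)) A <->
     (exists v : R, v != 0 /\ A = mx2 v^-1 0 0 1)) /\
  (* (5) *)
  (forall c : R, c != 0 ->
   forall A : 'M[R]_2,
     isotropy (typeA 0 0 1 0 c 2) A <->
     (exists w : R, A = mx2 1 (- w) 0 1)) /\
  (* (6) *)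
  (forall A : 'M[R]_2,
     isotropy (typeA 0 0 1 0 0 2) A <->
     (exists w v : R, v != 0 /\ A = mx2 v^-1 (- (v^-1 * w)) 0 1)) /\
  (* (7) *)
  (forall c : R, c != 0 ->
   forall A : 'M[R]_2,
     isotropy (typeA 1 0 0 0 (1 + c ^+ 2) (2 * c)) A <-> A = 1%:M) /\
  (* (8) *)
  (forall A : 'M[R]_2,
     isotropy (typeA 1 0 0 0 (1 + 0 ^+ 2) (2 * 0)) A <->
     (A = 1%:M \/ A = mx2 1 0 0 (-1))).
Proof.
split; first exact: isotropy_M1.
split; first exact: isotropy_M2.
split; first exact: isotropy_M2_Nhalf.
split; first by move=> c1 c0 _; exact: isotropy_M3.
split; first exact: isotropy_M4_neq0.
split; first exact: isotropy_M4_0.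
split; first exact: isotropy_M5.
exact: isotropy_M5_0.
Qed.
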